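(* Let $n\in\mathbb N\cup\{\omega\}$, $P$ an $n$-polygraph and $u$ a cell of $P^*$. There exist a finite $n$-polygraph $\tilde P$ (with finitely many generators in total), a monomorphism $F\colon\tilde P\to P$ of polygraphs and a cell $\tilde u$ of $\tilde P^*$ such that $F^*(\tilde u)=u$ and $\mathrm{supp}(\tilde u)=\bigsqcup_k\tilde P_k$.
   Context: An $n$-precategory is an $n$-globular set with identities $1_u$ and compositions $u\ast_iv$ satisfying the axioms of strict $n$-categories except the interchange law. An $n$-polygraph $P$ consists of sets $P_k$ of $k$-generators with globular sources and targets in the free precategory on lower generators; $P^*$ is the free $n$-precategory it generates, generators being identified with cells; morphisms are generator-wise maps compatible with sources/targets, inducing $F^*\colon P^*\to Q^*$. The support $\mathrm{supp}(u)\subseteq\bigsqcup_kP_k$ of a cell is defined inductively: $\mathrm{supp}(g)=\{g\}$ for $g\in P_0$; $\mathrm{supp}(g)=\{g\}\cup\mathrm{supp}(s(g))\cup\mathrm{supp}(t(g))$ for a generator $g\in P_{k+1}$; $\mathrm{supp}(1_{u'})=\mathrm{supp}(u')$; $\mathrm{supp}(u_1\ast_iu_2)=\mathrm{supp}(u_1)\cup\mathrm{supp}(u_2)$. *)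

From Stdlib Require Import Arith List.

(* n in N u {omega}: [Some m] is the natural number m, [None] is omega. *)
Definition le_inf (k : nat) (n : option nat) : Prop :=
  match n with None => True | Some m => k <= m end.

Inductive term (G : Type) : Type :=
| Gen  : G -> term G
| Id   : term G -> term G
| Comp : nat -> term G -> term G -> term G.

Arguments Gen {G} _.
Arguments Id {G} _.
Arguments Comp {G} _ _ _.

Fixpoint map_term {G H : Type} (f : G -> H) (t : term G) : term H :=
  match t with
  | Gen g => Gen (f g)
  | Id t' => Id (map_term f t')
  | Comp i t1 t2 => Comp i (map_term f t1) (map_term f t2)
  end.

Definition idn {G : Type} (m : nat) (t : term G) : term G := Nat.iter m (@Id G) t.

Section FreePrecategory.
Variable G : Type.
Variable gdim : G -> nat.
Variable gsrc gtgt : G -> term G.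

Fixpoint srcT (k : nat) (t : term G) : term G :=
  match t with
  | Gen g => gsrc g
  | Id t' => t'
  | Comp i t1 t2 => if Nat.eqb (S i) k then srcT k t1
                    else Comp i (srcT k t1) (srcT k t2)
  end.

Fixpoint tgtT (k : nat) (t : term G) : term G :=
  match t with
  | Gen g => gtgt g
  | Id t' => t'
  | Comp i t1 t2 => if Nat.eqb (S i) k then tgtT k t2
                    else Comp i (tgtT k t1) (tgtT k t2)
  end.

(* m-fold iterated source / target of a k-cell; the i-source s_i of a
   k-cell t is [srcN (k - i) k t]. *)
Fixpoint srcN (m k : nat) (t : term G) : term G :=
  match m with 0 => t | S m' => srcN m' (pred k) (srcT k t) end.
Fixpoint tgtN (m k : nat) (t : term G) : term G :=
  match m with 0 => t | S m' => tgtN m' (pred k) (tgtT k t) end.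

(* [wf k t] : t denotes a k-cell of the free precategory;
   [eqv k t t'] : t and t' denote the same k-cell (the congruence generated
   by the axioms of precategories: associativity, units, functoriality of
   identities w.r.t. composition; no interchange law). *)
Inductive wf : nat -> term G -> Prop :=
| wf_gen : forall g, wf (gdim g) (Gen g)
| wf_id : forall k t, wf k t -> wf (S k) (Id t)
| wf_comp : forall k i t1 t2, i < k -> wf k t1 -> wf k t2 ->
    eqv i (tgtN (k - i) k t1) (srcN (k - i) k t2) -> wf k (Comp i t1 t2)
with eqv : nat -> term G -> term G -> Prop :=
| eqv_refl : forall k t, wf k t -> eqv k t t
| eqv_sym : forall k t t', eqv k t t' -> eqv k t' t
| eqv_trans : forall k t t' t'', eqv k t t' -> eqv k t' t'' -> eqv k t t''
| eqv_id : forall k t t', eqv k t t' -> eqv (S k) (Id t) (Id t')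
| eqv_comp : forall k i t1 t1' t2 t2', i < k -> eqv k t1 t1' -> eqv k t2 t2' ->
    eqv i (tgtN (k - i) k t1) (srcN (k - i) k t2) ->
    eqv k (Comp i t1 t2) (Comp i t1' t2')
| eqv_assoc : forall k i t1 t2 t3,
    wf k (Comp i (Comp i t1 t2) t3) -> wf k (Comp i t1 (Comp i t2 t3)) ->
    eqv k (Comp i (Comp i t1 t2) t3) (Comp i t1 (Comp i t2 t3))
| eqv_unitl : forall k i t, i < k -> wf k t ->
    eqv k (Comp i (idn (k - i) (srcN (k - i) k t)) t) t
| eqv_unitr : forall k i t, i < k -> wf k t ->
    eqv k (Comp i t (idn (k - i) (tgtN (k - i) k t))) t
| eqv_idcomp : forall k i t1 t2, wf k (Comp i t1 t2) ->
    eqv (S k) (Id (Comp i t1 t2)) (Comp i (Id t1) (Id t2)).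

Inductive supp : term G -> G -> Prop :=
| supp_gen : forall g, supp (Gen g) g
| supp_gsrc : forall g h, 0 < gdim g -> supp (gsrc g) h -> supp (Gen g) h
| supp_gtgt : forall g h, 0 < gdim g -> supp (gtgt g) h -> supp (Gen g) h
| supp_id : forall t h, supp t h -> supp (Id t) h
| supp_compl : forall i t1 t2 h, supp t1 h -> supp (Comp i t1 t2) h
| supp_compr : forall i t1 t2 h, supp t2 h -> supp (Comp i t1 t2) h.

End FreePrecategory.

Arguments srcT {G} gsrc _ _.
Arguments wf {G} gdim gsrc gtgt _ _.
Arguments eqv {G} gdim gsrc gtgt _ _ _.
Arguments supp {G} gdim gsrc gtgt _ _.
Arguments tgtT {G} gtgt _ _.

Record polygraph (n : option nat) := Polygraph {
  pgen : Type;
  pdim : pgen -> nat;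
  psrc : pgen -> term pgen;
  ptgt : pgen -> term pgen;
  pdim_le : forall g, le_inf (pdim g) n;
  psrc_wf : forall g k, pdim g = S k -> wf pdim psrc ptgt k (psrc g);
  ptgt_wf : forall g k, pdim g = S k -> wf pdim psrc ptgt k (ptgt g);
  pglob_src : forall g k, pdim g = S (S k) ->
    eqv pdim psrc ptgt k (srcT psrc (S k) (psrc g)) (srcT psrc (S k) (ptgt g));
  pglob_tgt : forall g k, pdim g = S (S k) ->
    eqv pdim psrc ptgt k (tgtT ptgt (S k) (psrc g)) (tgtT ptgt (S k) (ptgt g))
}.

Arguments pgen {n} _.
Arguments pdim {n} _ _.
Arguments psrc {n} _ _.
Arguments ptgt {n} _ _.

Definition pwf {n} (P : polygraph n) := wf (pdim P) (psrc P) (ptgt P).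
Definition peqv {n} (P : polygraph n) := eqv (pdim P) (psrc P) (ptgt P).
Definition psupp {n} (P : polygraph n) := supp (pdim P) (psrc P) (ptgt P).

Record pmorphism {n} (Q P : polygraph n) := PMorphism {
  pm_fun : pgen Q -> pgen P;
  pm_dim : forall g, pdim P (pm_fun g) = pdim Q g;
  pm_src : forall g k, pdim Q g = S k ->
    peqv P k (psrc P (pm_fun g)) (map_term pm_fun (psrc Q g));
  pm_tgt : forall g k, pdim Q g = S k ->
    peqv P k (ptgt P (pm_fun g)) (map_term pm_fun (ptgt Q g))
}.

Arguments pm_fun {n Q P} _ _.

Definition pmono {n} {Q P : polygraph n} (F : pmorphism Q P) : Prop :=
  forall g g', pm_fun F g = pm_fun F g' -> g = g'.

Definition pfinite {n} (P : polygraph n) : Prop :=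
  exists l : list (pgen P), forall g, In g l.

From Stdlib Require Import Arith List Lia ClassicalEpsilon ProofIrrelevance.

(* The generators in supp(u) span a sub-polygraph of P, since the support of
   a generator contains the supports of its source and target; it is finite
   because supports are finite, by induction on dimension.  The cell u lifts
   to it because iterated sources and targets of a cell have smaller support
   and the precategory axioms preserve supports, so every well-formedness and
   equality condition met while checking u only involves generators of
   supp(u). *)

Section Terms.
Context {G : Type} (gdim : G -> nat) (gsrc gtgt : G -> term G).

Lemma supp_Comp i t1 t2 h :
  supp gdim gsrc gtgt (Comp i t1 t2) h <-> supp gdim gsrc gtgt t1 h \/ supp gdim gsrc gtgt t2 h.
Proof.
  split; [intro H; inversion H; auto|].
  intros [H|H]; [apply supp_compl | apply supp_compr]; exact H.
Qed.

Lemma supp_Id t h : supp gdim gsrc gtgt (Id t) h <-> supp gdim gsrc gtgt t h.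
Proof. split; intro H; [inversion H; auto | constructor; exact H]. Qed.

Lemma supp_idn j t h : supp gdim gsrc gtgt (idn j t) h <-> supp gdim gsrc gtgt t h.
Proof. induction j as [|j IH]; [reflexivity|]. unfold idn in *; simpl. now rewrite supp_Id. Qed.

Lemma supp_inhabited t : exists h, supp gdim gsrc gtgt t h.
Proof.
  induction t as [g | t [h H] | i t1 [h H] t2 _].
  - exists g; constructor.
  - exists h; now apply supp_Id.
  - exists h; apply supp_Comp; now left.
Qed.

Lemma supp_Gen_trans t g h :
  supp gdim gsrc gtgt t g -> supp gdim gsrc gtgt (Gen g) h -> supp gdim gsrc gtgt t h.
Proof.
  induction 1; intro Hg; try assumption.
  - apply supp_gsrc; auto.
  - apply supp_gtgt; auto.
  - apply supp_id; auto.
  - apply supp_compl; auto.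
  - apply supp_compr; auto.
Qed.

(* [graded k t] is [wf k t] without the composability conditions; unlike
   [wf], it is stable under sources and targets without any appeal to
   globularity. *)
Inductive graded : nat -> term G -> Prop :=
| graded_Gen g : graded (gdim g) (Gen g)
| graded_Id k t : graded k t -> graded (S k) (Id t)
| graded_Comp k i t1 t2 : graded k t1 -> graded k t2 -> graded k (Comp i t1 t2).

Lemma graded_idn j k t : graded k t -> graded (j + k) (idn j t).
Proof. intro H; induction j as [|j IH]; [exact H | unfold idn in *; simpl; now constructor]. Qed.

Definition face (b : bool) k t := if b then srcT gsrc k t else tgtT gtgt k t.
Definition faceN (b : bool) m k t := if b then srcN G gsrc m k t else tgtN G gtgt m k t.

Lemma faceN_S b m k t : faceN b (S m) k t = faceN b m (pred k) (face b k t).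
Proof. now destruct b. Qed.

End Terms.

Lemma map_idn {G H} (f : G -> H) j t : map_term f (idn j t) = idn j (map_term f t).
Proof. induction j as [|j IH]; [reflexivity | unfold idn in *; simpl; now rewrite IH]. Qed.

Scheme wf_eqv_ind := Induction for wf Sort Prop
  with eqv_wf_ind := Induction for eqv Sort Prop.
Combined Scheme wf_eqv_mut from wf_eqv_ind, eqv_wf_ind.

Section FreePrecategory.
Context {n : option nat} (P : polygraph n).

Local Notation graded := (graded (pdim P)).
Local Notation face := (face (psrc P) (ptgt P)).
Local Notation faceN := (faceN (psrc P) (ptgt P)).

Lemma wf_graded k t : pwf P k t -> graded k t.
Proof. induction 1; constructor; assumption. Qed.

Lemma graded_face b k t : graded k t -> 0 < k -> graded (pred k) (face b k t).
Proof.
  induction 1 as [g | k t Ht _ | k i t1 t2 _ IH1 _ IH2]; intro Hk;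
    destruct b; cbn [face srcT tgtT pred].
  - destruct (pdim P g) eqn:E; [lia|]. now apply wf_graded, psrc_wf.
  - destruct (pdim P g) eqn:E; [lia|]. now apply wf_graded, ptgt_wf.
  - assumption.
  - assumption.
  - destruct (S i =? k); [|constructor]; auto.
  - destruct (S i =? k); [|constructor]; auto.
Qed.

Lemma supp_face b k t h : graded k t -> 0 < k -> psupp P (face b k t) h -> psupp P t h.
Proof.
  unfold psupp.
  induction 1 as [g | k t _ _ | k i t1 t2 _ IH1 _ IH2]; intros Hk Hs;
    destruct b; cbn [face srcT tgtT] in Hs.
  - now apply supp_gsrc.
  - now apply supp_gtgt.
  - now apply supp_Id.
  - now apply supp_Id.
  - apply supp_Comp. destruct (S i =? k); [|apply supp_Comp in Hs as [Hs|Hs]]; auto.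
  - apply supp_Comp. destruct (S i =? k); [|apply supp_Comp in Hs as [Hs|Hs]]; auto.
Qed.

Lemma graded_faceN b m k t : m <= k -> graded k t -> graded (k - m) (faceN b m k t).
Proof.
  revert k t; induction m as [|m IH]; intros k t Hm Ht.
  - rewrite Nat.sub_0_r. now destruct b.
  - rewrite faceN_S. replace (k - S m) with (pred k - m) by lia.
    apply IH; [lia | apply graded_face; auto; lia].
Qed.

Lemma supp_faceN b m k t h : m <= k -> graded k t -> psupp P (faceN b m k t) h -> psupp P t h.
Proof.
  revert k t; induction m as [|m IH]; intros k t Hm Ht; [now destruct b|].
  rewrite faceN_S. intro Hs. apply (supp_face b k t h Ht); [lia|].
  apply (IH (pred k)); [lia | apply graded_face; auto; lia | exact Hs].
Qed.

Lemma graded_unit b k i t : i < k -> graded k t -> graded k (idn (k - i) (faceN b (k - i) k t)).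
Proof.
  intros Hi Ht. replace k with ((k - i) + (k - (k - i))) at 1 by lia.
  apply graded_idn, graded_faceN; auto; lia.
Qed.

Lemma supp_unit b k i t h : i < k -> graded k t ->
  psupp P (idn (k - i) (faceN b (k - i) k t)) h -> psupp P t h.
Proof. intros Hi Ht Hs. apply supp_idn, supp_faceN in Hs; auto; lia. Qed.

Lemma eqv_graded k t t' : peqv P k t t' -> graded k t /\ graded k t'.
Proof.
  induction 1; try tauto.
  - split; now apply wf_graded.
  - split; constructor; tauto.
  - split; constructor; tauto.
  - split; now apply wf_graded.
  - assert (Ht : graded k t) by now apply wf_graded.
    split; auto. constructor; auto. apply (graded_unit true); auto.
  - assert (Ht : graded k t) by now apply wf_graded.
    split; auto. constructor; auto. apply (graded_unit false); auto.
  - assert (Hc : graded k (Comp i t1 t2)) by now apply wf_graded.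
    inversion Hc; subst. split; repeat constructor; auto.
Qed.

Lemma eqv_supp k t t' : peqv P k t t' -> forall h, psupp P t h <-> psupp P t' h.
Proof.
  unfold peqv, psupp.
  induction 1 as [k t _ | k t t' _ IH | k t t' t'' _ IH1 _ IH2 | k t t' _ IH
    | k i t1 t1' t2 t2' _ _ IH1 _ IH2 _ _ | k i t1 t2 t3 _ _ | k i t Hi Ht | k i t Hi Ht
    | k i t1 t2 _]; intro h; rewrite ?supp_Comp, ?supp_Id, ?supp_Comp.
  - reflexivity.
  - now rewrite IH.
  - now rewrite IH1.
  - apply IH.
  - now rewrite IH1, IH2.
  - tauto.
  - apply wf_graded in Ht.
    split; [intros [Hs|Hs]; [exact (supp_unit true k i t h Hi Ht Hs) | exact Hs] | now right].
  - apply wf_graded in Ht.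
    split; [intros [Hs|Hs]; [exact Hs | exact (supp_unit false k i t h Hi Ht Hs)] | now left].
  - tauto.
Qed.

Definition finite_supp t := exists l, forall h, psupp P t h -> In h l.

Lemma finite_supp_graded_le N k t : graded k t -> k <= N ->
  (forall g, pdim P g <= N -> finite_supp (Gen g)) -> finite_supp t.
Proof.
  unfold finite_supp, psupp.
  induction 1 as [g | k t _ IH | k i t1 t2 _ IH1 _ IH2]; intros Hk HN; auto.
  - destruct IH as [l Hl]; [lia | assumption |].
    exists l. intros h Hh. apply Hl, supp_Id, Hh.
  - destruct IH1 as [l1 H1]; destruct IH2 as [l2 H2]; auto.
    exists (l1 ++ l2). intros h Hh. apply in_or_app. apply supp_Comp in Hh as [Hh|Hh]; auto.
Qed.

Lemma finite_supp_Gen N g : pdim P g <= N -> finite_supp (Gen g).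
Proof.
  revert g; induction N as [|N IH]; intros g Hg.
  - exists (g :: nil). intros h Hh. inversion Hh; subst; simpl; auto; lia.
  - destruct (Nat.eq_dec (pdim P g) (S N)) as [E|E]; [|apply IH; lia].
    destruct (finite_supp_graded_le N N (psrc P g)) as [ls Hs];
      [now apply wf_graded, psrc_wf | lia | assumption |].
    destruct (finite_supp_graded_le N N (ptgt P g)) as [lt Ht];
      [now apply wf_graded, ptgt_wf | lia | assumption |].
    exists (g :: ls ++ lt). intros h Hh.
    inversion Hh; subst; simpl; auto using in_or_app.
Qed.

Lemma finite_supp_graded k t : graded k t -> finite_supp t.
Proof. intro Ht. apply (finite_supp_graded_le k k t Ht (le_n k)), finite_supp_Gen. Qed.

End FreePrecategory.

Section Restriction.
Context {n : option nat} (P : polygraph n) (X : pgen P -> Prop).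
Hypothesis X_closed : forall g h, X g -> psupp P (Gen g) h -> X h.
Variable default : {g | X g}.

Definition rgen := {g | X g}.
Definition rincl (g : rgen) : pgen P := proj1_sig g.
Definition rlift (g : pgen P) : rgen :=
  match excluded_middle_informative (X g) with
  | left Hg => exist X g Hg
  | right _ => default
  end.
Definition rdim (g : rgen) := pdim P (rincl g).
Definition rsrc (g : rgen) := map_term rlift (psrc P (rincl g)).
Definition rtgt (g : rgen) := map_term rlift (ptgt P (rincl g)).

Definition supported t := forall h, psupp P t h -> X h.

Lemma rincl_rlift g : X g -> rincl (rlift g) = g.
Proof. intro Hg. unfold rlift. now destruct excluded_middle_informative. Qed.

Lemma rlift_rincl g : rlift (rincl g) = g.
Proof.
  destruct g as [g Hg]. unfold rlift; simpl.
  destruct excluded_middle_informative; [|contradiction].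
  now apply ProofIrrelevanceTheory.subset_eq_compat.
Qed.

Lemma rincl_inj g g' : rincl g = rincl g' -> g = g'.
Proof. intro E. now rewrite <- (rlift_rincl g), <- (rlift_rincl g'), E. Qed.

Lemma supported_Comp i t1 t2 : supported (Comp i t1 t2) <-> supported t1 /\ supported t2.
Proof. unfold supported, psupp. setoid_rewrite supp_Comp. firstorder. Qed.

Lemma supported_Id t : supported (Id t) <-> supported t.
Proof. unfold supported, psupp. setoid_rewrite supp_Id. reflexivity. Qed.

Lemma supported_Gen g : supported (Gen g) <-> X g.
Proof. split; [intro H; apply H; constructor | intros Hg h; now apply X_closed]. Qed.

Lemma supported_src g : X g -> 0 < pdim P g -> supported (psrc P g).
Proof. intros Hg Hd h Hh. apply (X_closed g); auto. now apply supp_gsrc. Qed.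

Lemma supported_tgt g : X g -> 0 < pdim P g -> supported (ptgt P g).
Proof. intros Hg Hd h Hh. apply (X_closed g); auto. now apply supp_gtgt. Qed.

Lemma supported_faceN b m k t : m <= k -> graded (pdim P) k t -> supported t ->
  supported (faceN (psrc P) (ptgt P) b m k t).
Proof. intros Hm Ht Hs h Hh. now apply Hs, (supp_faceN P b m k t). Qed.

Lemma supported_eqv k t t' : peqv P k t t' -> supported t <-> supported t'.
Proof. intro e. unfold supported. now setoid_rewrite (eqv_supp P k t t' e). Qed.

Lemma map_rincl_rlift t : supported t -> map_term rincl (map_term rlift t) = t.
Proof.
  induction t as [g | t IH | i t1 IH1 t2 IH2]; simpl.
  - rewrite supported_Gen. intro Hg. now rewrite rincl_rlift.
  - rewrite supported_Id. intro; now rewrite IH.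
  - rewrite supported_Comp. intros []; now rewrite IH1, IH2.
Qed.

Lemma face_rlift b k t : supported t ->
  face rsrc rtgt b k (map_term rlift t) = map_term rlift (face (psrc P) (ptgt P) b k t).
Proof.
  induction t as [g | t _ | i t1 IH1 t2 IH2]; destruct b; cbn [face srcT tgtT map_term].
  1,2: rewrite supported_Gen; intro Hg; unfold rsrc, rtgt; now rewrite rincl_rlift.
  1,2: reflexivity.
  all: rewrite supported_Comp; intros [H1 H2];
       cbn [face] in IH1, IH2; destruct (S i =? k); cbn [map_term]; now rewrite ?IH1, ?IH2.
Qed.

Lemma faceN_rlift b m k t : m <= k -> graded (pdim P) k t -> supported t ->
  faceN rsrc rtgt b m k (map_term rlift t) = map_term rlift (faceN (psrc P) (ptgt P) b m k t).
Proof.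
  revert k t; induction m as [|m IH]; intros k t Hm Ht Hs; [now destruct b|].
  rewrite !faceN_S, face_rlift by assumption. apply IH; [lia | apply graded_face; auto; lia |].
  apply (supported_faceN b 1 k t); auto; lia.
Qed.

Lemma srcN_rlift m k t : m <= k -> graded (pdim P) k t -> supported t ->
  srcN _ rsrc m k (map_term rlift t) = map_term rlift (srcN _ (psrc P) m k t).
Proof. exact (faceN_rlift true m k t). Qed.

Lemma tgtN_rlift m k t : m <= k -> graded (pdim P) k t -> supported t ->
  tgtN _ rtgt m k (map_term rlift t) = map_term rlift (tgtN _ (ptgt P) m k t).
Proof. exact (faceN_rlift false m k t). Qed.

Lemma srcT_rlift k t : supported t ->
  srcT rsrc k (map_term rlift t) = map_term rlift (srcT (psrc P) k t).
Proof. exact (face_rlift true k t). Qed.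

Lemma tgtT_rlift k t : supported t ->
  tgtT rtgt k (map_term rlift t) = map_term rlift (tgtT (ptgt P) k t).
Proof. exact (face_rlift false k t). Qed.

Lemma rlift_wf_eqv :
  (forall k t, pwf P k t -> supported t -> wf rdim rsrc rtgt k (map_term rlift t)) /\
  (forall k t t', peqv P k t t' -> supported t ->
     eqv rdim rsrc rtgt k (map_term rlift t) (map_term rlift t')).
Proof.
  apply (wf_eqv_mut _ (pdim P) (psrc P) (ptgt P)
    (fun k t _ => supported t -> wf rdim rsrc rtgt k (map_term rlift t))
    (fun k t t' _ => supported t ->
       eqv rdim rsrc rtgt k (map_term rlift t) (map_term rlift t'))); cbn [map_term].
  - intros g Hg. rewrite supported_Gen in Hg.
    replace (pdim P g) with (rdim (rlift g)) by (unfold rdim; now rewrite rincl_rlift).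
    constructor.
  - intros k t _ IH Hs. rewrite supported_Id in Hs. now constructor; apply IH.
  - intros k i t1 t2 Hi w1 IH1 w2 IH2 _ IH Hs. rewrite supported_Comp in Hs; destruct Hs as [H1 H2].
    apply wf_graded in w1, w2. apply wf_comp; auto.
    rewrite tgtN_rlift, srcN_rlift by (auto; lia).
    apply IH, (supported_faceN false); auto; lia.
  - intros k t _ IH Hs. now apply eqv_refl, IH.
  - intros k t t' e IH Hs. now apply eqv_sym, IH, (supported_eqv k t t' e).
  - intros k t t' t'' e1 IH1 _ IH2 Hs.
    apply eqv_trans with (map_term rlift t'); [now apply IH1|].
    now apply IH2, (supported_eqv k t t' e1).
  - intros k t t' _ IH Hs. rewrite supported_Id in Hs. now constructor; apply IH.
  - intros k i t1 t1' t2 t2' Hi e1 IH1 e2 IH2 _ IH Hs.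
    rewrite supported_Comp in Hs; destruct Hs as [H1 H2].
    apply eqv_graded in e1 as [g1 _], e2 as [g2 _]. apply eqv_comp; auto.
    rewrite tgtN_rlift, srcN_rlift by (auto; lia).
    apply IH, (supported_faceN false); auto; lia.
  - intros k i t1 t2 t3 _ IH1 _ IH2 Hs. apply eqv_assoc; [now apply IH1|].
    apply IH2. rewrite !supported_Comp in *. tauto.
  - intros k i t Hi w IH Hs. rewrite supported_Comp in Hs; destruct Hs as [_ Ht].
    apply wf_graded in w. rewrite map_idn, <- srcN_rlift by (auto; lia).
    apply eqv_unitl; auto.
  - intros k i t Hi w IH Hs. rewrite supported_Comp in Hs; destruct Hs as [Ht _].
    apply wf_graded in w. rewrite map_idn, <- tgtN_rlift by (auto; lia).
    apply eqv_unitr; auto.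
  - intros k i t1 t2 _ IH Hs. rewrite supported_Id in Hs. now apply eqv_idcomp, IH.
Qed.

Lemma rdim_le g : le_inf (rdim g) n.
Proof. apply pdim_le. Qed.

Lemma supported_rsrc g : 0 < rdim g -> supported (psrc P (rincl g)).
Proof. apply supported_src. exact (proj2_sig g). Qed.

Lemma supported_rtgt g : 0 < rdim g -> supported (ptgt P (rincl g)).
Proof. apply supported_tgt. exact (proj2_sig g). Qed.

Lemma rsrc_wf g k : rdim g = S k -> wf rdim rsrc rtgt k (rsrc g).
Proof. intro E. apply rlift_wf_eqv; [now apply psrc_wf | apply supported_rsrc; lia]. Qed.

Lemma rtgt_wf g k : rdim g = S k -> wf rdim rsrc rtgt k (rtgt g).
Proof. intro E. apply rlift_wf_eqv; [now apply ptgt_wf | apply supported_rtgt; lia]. Qed.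

Lemma rglob_src g k : rdim g = S (S k) ->
  eqv rdim rsrc rtgt k (srcT rsrc (S k) (rsrc g)) (srcT rsrc (S k) (rtgt g)).
Proof.
  intro E. assert (Hs := supported_rsrc g ltac:(lia)). assert (Ht := supported_rtgt g ltac:(lia)).
  change (rsrc g) with (map_term rlift (psrc P (rincl g))).
  change (rtgt g) with (map_term rlift (ptgt P (rincl g))). rewrite !srcT_rlift by assumption.
  apply rlift_wf_eqv; [now apply pglob_src|].
  apply (supported_faceN true 1 (S k)); [lia | now apply wf_graded, psrc_wf | assumption].
Qed.

Lemma rglob_tgt g k : rdim g = S (S k) ->
  eqv rdim rsrc rtgt k (tgtT rtgt (S k) (rsrc g)) (tgtT rtgt (S k) (rtgt g)).
Proof.
  intro E. assert (Hs := supported_rsrc g ltac:(lia)). assert (Ht := supported_rtgt g ltac:(lia)).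
  change (rsrc g) with (map_term rlift (psrc P (rincl g))).
  change (rtgt g) with (map_term rlift (ptgt P (rincl g))). rewrite !tgtT_rlift by assumption.
  apply rlift_wf_eqv; [now apply pglob_tgt|].
  apply (supported_faceN false 1 (S k)); [lia | now apply wf_graded, psrc_wf | assumption].
Qed.

Definition restriction : polygraph n :=
  Polygraph n rgen rdim rsrc rtgt rdim_le rsrc_wf rtgt_wf rglob_src rglob_tgt.

Lemma rincl_src g k : pdim restriction g = S k ->
  peqv P k (psrc P (rincl g)) (map_term rincl (psrc restriction g)).
Proof.
  intro E. simpl in *. unfold rsrc. rewrite map_rincl_rlift by (apply supported_rsrc; lia).
  now apply eqv_refl, psrc_wf.
Qed.

Lemma rincl_tgt g k : pdim restriction g = S k ->
  peqv P k (ptgt P (rincl g)) (map_term rincl (ptgt restriction g)).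
Proof.
  intro E. simpl in *. unfold rtgt. rewrite map_rincl_rlift by (apply supported_rtgt; lia).
  now apply eqv_refl, ptgt_wf.
Qed.

Definition restriction_incl : pmorphism restriction P :=
  PMorphism n restriction P rincl (fun g => eq_refl) rincl_src rincl_tgt.

Lemma restriction_incl_mono : pmono restriction_incl.
Proof. exact rincl_inj. Qed.

Lemma restriction_finite : (exists l, forall g, X g -> In g l) -> pfinite restriction.
Proof.
  intros [l Hl]. exists (map rlift l). intro g.
  rewrite <- (rlift_rincl g). apply in_map, Hl. exact (proj2_sig g).
Qed.

Lemma supp_rlift t h : psupp P t h -> supported t -> psupp restriction (map_term rlift t) (rlift h).
Proof.
  unfold psupp.
  induction 1 as [g | g h Hd _ IH | g h Hd _ IH | t h _ IH | i t1 t2 h _ IH | i t1 t2 h _ IH];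
    intro Hs; cbn [map_term].
  - constructor.
  - rewrite supported_Gen in Hs.
    apply supp_gsrc; simpl; unfold rdim, rsrc; rewrite rincl_rlift by assumption; auto.
    apply IH, supported_src; assumption.
  - rewrite supported_Gen in Hs.
    apply supp_gtgt; simpl; unfold rdim, rtgt; rewrite rincl_rlift by assumption; auto.
    apply IH, supported_tgt; assumption.
  - rewrite supported_Id in Hs. now constructor; apply IH.
  - rewrite supported_Comp in Hs. now apply supp_compl, IH.
  - rewrite supported_Comp in Hs. now apply supp_compr, IH.
Qed.

End Restriction.

Theorem proposition4p3 (n : option nat) (P : polygraph n) (k : nat) (u : term (pgen P)) :
  le_inf k n -> pwf P k u ->
  exists (Pt : polygraph n) (F : pmorphism Pt P),
    pfinite Pt /\ pmono F /\
    exists ut : term (pgen Pt),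
      pwf Pt k ut /\ peqv P k (map_term (pm_fun F) ut) u /\
      (forall g : pgen Pt, psupp Pt ut g).
Proof.
  intros _ Hu.
  set (X := psupp P u).
  assert (HX : forall g h, X g -> psupp P (Gen g) h -> X h) by exact (supp_Gen_trans _ _ _ u).
  destruct (supp_inhabited (pdim P) (psrc P) (ptgt P) u) as [h0 H0].
  set (d := exist X h0 H0).
  assert (Hu_supported : supported P X u) by (intros h Hh; exact Hh).
  exists (restriction P X HX d), (restriction_incl P X HX d).
  split; [|split].
  - apply restriction_finite. exact (finite_supp_graded P k u (wf_graded P k u Hu)).
  - apply restriction_incl_mono.
  - exists (map_term (rlift P X d) u). split; [|split].
    + now apply rlift_wf_eqv.
    + simpl. rewrite map_rincl_rlift by assumption. now apply eqv_refl.
    + intro g. rewrite <- (rlift_rincl P X d g).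
      apply supp_rlift; [exact (proj2_sig g) | assumption].
Qed.
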